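(* Let $L$ be a frame and $f\in\overline{\mathrm{H}}(L)$. Then for all $r,s\in\mathbb{Q}$: (1) $f(r,\textsf{---})=\bigvee_{p>r}f(\textsf{---},p)^\ast=\bigvee_{p>r}f(p,\textsf{---})^{\ast\ast}$; (2) $f(\textsf{---},s)=\bigvee_{q<s}f(q,\textsf{---})^\ast=\bigvee_{q<s}f(\textsf{---},q)^{\ast\ast}$.
   Context: $\mathbb{Q}$ is the rationals; $a^\ast$ denotes the pseudocomplement of $a$ in a frame. The frame $\mathfrak{L}(\overline{\mathbb{IR}})$ is presented by generators $(r,\textsf{---})$, $(\textsf{---},s)$ ($r,s\in\mathbb{Q}$) subject to (r1) $(r,\textsf{---})\wedge(\textsf{---},s)=0$ whenever $r\ge s$; (r3) $(r,\textsf{---})=\bigvee_{s>r}(s,\textsf{---})$; (r4) $(\textsf{---},s)=\bigvee_{r<s}(\textsf{---},r)$. $\overline{\mathrm{IC}}(L)$ is the set of frame homomorphisms $\mathfrak{L}(\overline{\mathbb{IR}})\to L$, and $\overline{\mathrm{H}}(L)$ (Hausdorff continuous extended functions) is the set of $f\in\overline{\mathrm{IC}}(L)$ with $f(r,\textsf{---})^\ast\le f(\textsf{---},s)$ and $f(\textsf{---},s)^\ast\le f(r,\textsf{---})$ for all $r<s$ in $\mathbb{Q}$. *)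

From mathcomp Require Import all_boot all_order all_algebra.
Set Implicit Arguments. Unset Strict Implicit. Unset Printing Implicit Defensive.
Import Order.TTheory GRing.Theory Num.Theory.

Record frame := Frame {
  fcar :> Type;
  fle : fcar -> fcar -> Prop;
  fmeet : fcar -> fcar -> fcar;
  fsup : (fcar -> Prop) -> fcar;
  fle_refl : forall a, fle a a;
  fle_trans : forall a b c, fle a b -> fle b c -> fle a c;
  fle_anti : forall a b, fle a b -> fle b a -> a = b;
  fmeet_lel : forall a b, fle (fmeet a b) a;
  fmeet_ler : forall a b, fle (fmeet a b) b;
  fmeet_glb : forall a b c, fle c a -> fle c b -> fle c (fmeet a b);
  fsup_ub : forall (S : fcar -> Prop) a, S a -> fle a (fsup S);
  fsup_lub : forall (S : fcar -> Prop) b, (forall a, S a -> fle a b) -> fle (fsup S) b;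
  fmeet_sup_distr : forall a (S : fcar -> Prop),
    fmeet a (fsup S) = fsup (fun x => exists2 s, S s & x = fmeet a s)
}.

Section FrameOps.
Variable L : frame.
Definition fbot : L := fsup (fun _ : L => False).
Definition ftop : L := fsup (fun _ : L => True).
Definition pcompl (a : L) : L := fsup (fun x => fmeet x a = fbot).
Definition fjoin {I : Type} (P : I -> Prop) (g : I -> L) : L :=
  fsup (fun x => exists2 i, P i & x = g i).
End FrameOps.

Local Open Scope ring_scope.

(* A frame homomorphism f : L(IR-bar) -> L is determined, by the universal
   property of the presentation, by its values on the generators
   (r,---) |-> lo r and (---,s) |-> up s, subject to (r1),(r3),(r4). *)
Record IC (L : frame) := MkIC {
  lo : rat -> L;
  up : rat -> L;
  ic_r1 : forall r s : rat, s <= r -> fmeet (lo r) (up s) = fbot L;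
  ic_r3 : forall r : rat, lo r = fjoin (fun s : rat => r < s) lo;
  ic_r4 : forall s : rat, up s = fjoin (fun r : rat => r < s) up
}.

Definition isH (L : frame) (f : IC L) : Prop :=
  forall r s : rat, r < s ->
    fle (pcompl (lo f r)) (up f s) /\ fle (pcompl (up f s)) (lo f r).

From mathcomp Require Import all_boot all_order all_algebra.
Import Order.TTheory GRing.Theory Num.Theory.
Set Implicit Arguments. Unset Strict Implicit.
Local Open Scope ring_scope.

(* Relations (r1) give f(p,---) <= f(---,p)^* and f(---,p) <= f(p,---)^*, while
   Hausdorff continuity, applied at a rational strictly between r and p, gives
   f(---,p)^* <= f(r,---) for r < p.  Hence every join in (1) is squeezed
   between the join of the f(p,---), p > r, which is f(r,---) by (r3), and
   f(r,---) itself; (2) is symmetric. *)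

Section FrameFacts.
Variable L : frame.
Implicit Types a b x : L.

Lemma fle_bot a : fle (fbot L) a.
Proof. by apply: fsup_lub => ? []. Qed.

Lemma fle_bot_eq a : fle a (fbot L) -> a = fbot L.
Proof. by move=> le_a0; apply: fle_anti le_a0 (fle_bot a). Qed.

Lemma fmeetC a b : fmeet a b = fmeet b a.
Proof.
by apply: fle_anti; apply: fmeet_glb; first [exact: fmeet_ler | exact: fmeet_lel].
Qed.

Lemma fmeet_le2l a x y : fle x y -> fle (fmeet x a) (fmeet y a).
Proof.
move=> le_xy; apply: fmeet_glb; last exact: fmeet_ler.
exact: fle_trans (fmeet_lel x a) le_xy.
Qed.

Lemma fmeet_pcompl a : fmeet a (pcompl a) = fbot L.
Proof.
apply: fle_bot_eq; rewrite /pcompl fmeet_sup_distr.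
by apply: fsup_lub => _ [x x_a0 ->]; rewrite fmeetC x_a0; exact: fle_refl.
Qed.

Lemma fle_pcompl x a : fmeet x a = fbot L -> fle x (pcompl a).
Proof. exact: fsup_ub. Qed.

Lemma pcompl_anti a b : fle a b -> fle (pcompl b) (pcompl a).
Proof.
move=> le_ab; apply/fle_pcompl/fle_bot_eq; rewrite fmeetC.
by rewrite -(fmeet_pcompl b); exact: fmeet_le2l.
Qed.

Lemma fle_pcompl2 a : fle a (pcompl (pcompl a)).
Proof. exact/fle_pcompl/fmeet_pcompl. Qed.

Lemma fjoin_ub (I : Type) (P : I -> Prop) (g : I -> L) i :
  P i -> fle (g i) (fjoin P g).
Proof. by move=> Pi; apply: fsup_ub; exists i. Qed.

Lemma fjoin_lub (I : Type) (P : I -> Prop) (g : I -> L) b :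
  (forall i, P i -> fle (g i) b) -> fle (fjoin P g) b.
Proof. by move=> le_gb; apply: fsup_lub => _ [i Pi ->]; exact: le_gb. Qed.

Lemma fjoin_squeeze (I : Type) (P : I -> Prop) (g h : I -> L) a :
  a = fjoin P g -> (forall i, P i -> fle (g i) (h i)) ->
  (forall i, P i -> fle (h i) a) -> a = fjoin P h.
Proof.
move=> a_eq le_gh le_ha; apply: fle_anti; last exact: fjoin_lub.
rewrite a_eq; apply: fjoin_lub => i Pi.
by apply: fle_trans (le_gh i Pi) _; exact: fjoin_ub.
Qed.
End FrameFacts.

Section HausdorffContinuous.
Variables (L : frame) (f : IC L).

Lemma lo_anti r q : r < q -> fle (lo f q) (lo f r).
Proof. by move=> lt_rq; rewrite [X in fle _ X](ic_r3 f r); exact: fjoin_ub. Qed.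

Lemma up_homo q s : q < s -> fle (up f q) (up f s).
Proof. by move=> lt_qs; rewrite [X in fle _ X](ic_r4 f s); exact: fjoin_ub. Qed.

Lemma lo_le_pcompl_up p : fle (lo f p) (pcompl (up f p)).
Proof. exact/fle_pcompl/ic_r1. Qed.

Lemma up_le_pcompl_lo p : fle (up f p) (pcompl (lo f p)).
Proof. by apply: fle_pcompl; rewrite fmeetC; exact: ic_r1. Qed.

Hypothesis f_H : isH f.

Lemma pcompl_up_le_lo r p : r < p -> fle (pcompl (up f p)) (lo f r).
Proof.
move=> lt_rp; have [lt_rm lt_mp] := midf_lt lt_rp.
by apply: fle_trans (proj2 (f_H lt_mp)) _; exact: lo_anti.
Qed.

Lemma pcompl_lo_le_up q s : q < s -> fle (pcompl (lo f q)) (up f s).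
Proof.
move=> lt_qs; have [lt_qm lt_ms] := midf_lt lt_qs.
by apply: fle_trans (proj1 (f_H lt_qm)) _; exact: up_homo.
Qed.

Lemma lo_join_pcompl_up r :
  lo f r = fjoin (fun p => r < p) (fun p => pcompl (up f p)).
Proof.
apply: fjoin_squeeze (ic_r3 f r) _ _ => p lt_rp.
  exact: lo_le_pcompl_up.
exact: pcompl_up_le_lo.
Qed.

Lemma lo_join_pcompl2_lo r :
  lo f r = fjoin (fun p => r < p) (fun p => pcompl (pcompl (lo f p))).
Proof.
apply: fjoin_squeeze (ic_r3 f r) _ _ => p lt_rp.
  exact: fle_pcompl2.
exact: fle_trans (pcompl_anti (up_le_pcompl_lo p)) (pcompl_up_le_lo lt_rp).
Qed.

Lemma up_join_pcompl_lo s :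
  up f s = fjoin (fun q => q < s) (fun q => pcompl (lo f q)).
Proof.
apply: fjoin_squeeze (ic_r4 f s) _ _ => q lt_qs.
  exact: up_le_pcompl_lo.
exact: pcompl_lo_le_up.
Qed.

Lemma up_join_pcompl2_up s :
  up f s = fjoin (fun q => q < s) (fun q => pcompl (pcompl (up f q))).
Proof.
apply: fjoin_squeeze (ic_r4 f s) _ _ => q lt_qs.
  exact: fle_pcompl2.
exact: fle_trans (pcompl_anti (lo_le_pcompl_up q)) (pcompl_lo_le_up lt_qs).
Qed.
End HausdorffContinuous.

Theorem lemma3p4 (L : frame) (f : IC L) (Hf : isH f) :
  forall r s : rat,
    (lo f r = fjoin (fun p : rat => r < p) (fun p => pcompl (up f p)) /\
     lo f r = fjoin (fun p : rat => r < p) (fun p => pcompl (pcompl (lo f p))))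
 /\ (up f s = fjoin (fun q : rat => q < s) (fun q => pcompl (lo f q)) /\
     up f s = fjoin (fun q : rat => q < s) (fun q => pcompl (pcompl (up f q)))).
Proof.
move=> r s; split; split.
- exact: lo_join_pcompl_up.
- exact: lo_join_pcompl2_lo.
- exact: up_join_pcompl_lo.
- exact: up_join_pcompl2_up.
Qed.
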